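(* Let $\mathcal G$ be a collection of subsets of $[n]$ such that the number of sets $C\in\mathcal G$ containing two distinct elements $i,j$ is the same for all $i\ne j$, and let $c_2=|\{C\in\mathcal G:\{1,2\}\subseteq C\}|$. Let $S$ be the sampling with $S=C$ with probability $1/|\mathcal G|$ for each $C\in\mathcal G$, assume its support is $c_1$-uniform, let $\mathbf S=\mathbf I_S$ and $\theta_{\mathbf S}=\frac1{c_1p_S}=\frac{|\mathcal G|}{c_1}$. (i) If $\mathbf W=\mathrm{diag}(w_1,\dots,w_n)\succ0$, then $$\rho\le\max_{i}\Big\{\Big(\frac{|\mathcal G|}{c_1}-1\Big)w_i+\sum_{j\ne i}w_j\Big|\frac{|\mathcal G|c_2}{c_1^2}-1\Big|\Big\}.$$ (ii) If $\mathbf W=\mathbf I$, then $$\rho=\max\Big\{\frac{|\mathcal G|}{c_1}\Big(1+(n-1)\frac{c_2}{c_1}\Big)-n,\ \frac{|\mathcal G|}{c_1}\Big(1-\frac{c_2}{c_1}\Big)\Big\}.$$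
   Context: $c_1$-uniform support: $|\{C\in\mathcal G:i\in C\}|=c_1$ for all $i\in[n]$, with $c_1\ge1$. $\mathbf I_S$ is the column submatrix of the $n\times n$ identity with columns in $S$; $e$ all-ones; $\Pi_{\mathbf S}=\mathbf S(\mathbf S^\top\mathbf W\mathbf S)^\dagger\mathbf S^\top\mathbf W$; $\rho=\lambda_{\max}\big(\mathbf W^{1/2}(\mathbb{E}[\theta_{\mathbf S}^2\Pi_{\mathbf S}ee^\top\Pi_{\mathbf S}^\top]-ee^\top)\mathbf W^{1/2}\big)$. *)

From HB Require Import structures.
From mathcomp Require Import all_boot all_order all_algebra.
From Stdlib Require Import ClassicalEpsilon.
Set Implicit Arguments. Unset Strict Implicit. Unset Printing Implicit Defensive.
Import Order.TTheory GRing.Theory Num.Theory.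
Local Open Scope ring_scope.

Section Defs.
Variable R : rcfType.

(* Moore--Penrose pseudoinverse: the (unique) matrix satisfying the four
   Penrose equations (it always exists for real matrices). *)
Definition mx_pinv m n (A : 'M[R]_(m, n)) : 'M[R]_(n, m) :=
  epsilon (inhabits 0) (fun B : 'M[R]_(n, m) =>
    [/\ A *m B *m A = A, B *m A *m B = B,
        (A *m B)^T = A *m B & (B *m A)^T = B *m A]).

Definition lambda_max n (M : 'M[R]_n) : R :=
  epsilon (inhabits 0) (fun l : R =>
    eigenvalue M l /\ forall a, eigenvalue M a -> a <= l).

(* I_C : column submatrix of the n x n identity with columns in C *)
Definition colsel n (C : {set 'I_n}) : 'M[R]_(n, #|C|) :=
  \matrix_(i < n, k < #|C|) (i == enum_val k)%:R.

Definition proj_S n (W : 'M[R]_n) (C : {set 'I_n}) : 'M[R]_n :=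
  let S := colsel C in S *m mx_pinv (S^T *m W *m S) *m S^T *m W.

Definition ones n : 'cV[R]_n := const_mx 1.

(* theta_S = 1/(c1 p_S) = |G|/c1 for the uniform sampling over G *)
Definition theta n (G : {set {set 'I_n}}) (c1 : nat) : R := #|G|%:R / c1%:R.

(* E[theta^2 Pi_S e e^T Pi_S^T] for S uniform over G *)
Definition expect_term n (W : 'M[R]_n) (G : {set {set 'I_n}}) (c1 : nat)
  : 'M[R]_n :=
  (#|G|%:R)^-1 *: \sum_(C in G)
     (theta G c1 ^+ 2 *: (proj_S W C *m ones n *m (ones n)^T *m (proj_S W C)^T)).

(* rho = lambda_max(W^{1/2} (E[...] - e e^T) W^{1/2}); Whalf is W^{1/2} *)
Definition rho n (W Whalf : 'M[R]_n) (G : {set {set 'I_n}}) (c1 : nat) : R :=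
  lambda_max (Whalf *m (expect_term W G c1 - ones n *m (ones n)^T) *m Whalf).

(* maximum of a finite family indexed by 'I_n (0 if n = 0) *)
Definition fmax n : ('I_n -> R) -> R :=
  match n with
  | 0 => fun _ => 0
  | m.+1 => fun f => \big[Num.max/f ord0]_(j < m.+1) f j
  end.

End Defs.

Definition pair_count n (G : {set {set 'I_n}}) (i j : 'I_n) : nat :=
  #|[set C in G | (i \in C) && (j \in C)]|.

(* same count, with the two elements given by their (0-based) nat values *)
Definition pair_count_nat n (G : {set {set 'I_n}}) (a b : nat) : nat :=
  #|[set C in G | [exists i in C, val i == a] && [exists j in C, val j == b]]|.

From HB Require Import structures.
From mathcomp Require Import all_boot all_order all_algebra.
From Stdlib Require Import ClassicalEpsilon.
From mathcomp Require Import complex polyrcf.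
From mathcomp Require Import ring lra.
Set Implicit Arguments.
Unset Strict Implicit.
Unset Printing Implicit Defensive.

(* For a positive diagonal W the weights cancel inside the pseudoinverse, so
   Pi_C = I_C I_C^T and Pi_C e is the indicator vector of C.  Averaging over G,
   the uniform one- and two-element counts make E[theta^2 Pi e e^T Pi^T] - e e^T
   the matrix M with a = |G|/c1 - 1 on the diagonal and b = |G| c2/c1^2 - 1 off
   it.  (i) rho is an eigenvalue of W^{1/2} M W^{1/2}, which is similar to W M,
   and Gershgorin's theorem on the columns of W M gives the bound.
   (ii) M = (a - b) I + b e e^T has exactly the eigenvalues a + (n - 1) b
   (eigenvector e) and a - b (eigenvectors orthogonal to e). *)

Import Order.TTheory GRing.Theory Num.Theory.
Local Open Scope ring_scope.

Definition diag_offdiag_mx (T : Type) n (a b : T) : 'M[T]_n :=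
  \matrix_(i, j) if i == j then a else b.

Lemma eigenvalue_similar (F : fieldType) n (P A : 'M[F]_n) a :
  P \in unitmx -> eigenvalue A a -> eigenvalue (invmx P *m A *m P) a.
Proof.
move=> P_unit /eigenvalueP [v vA v_neq0]; apply/eigenvalueP; exists (v *m P).
  by rewrite !mulmxA mulmxK // vA scalemxAl.
by rewrite mulmx_free_eq0 ?row_free_unit.
Qed.

Lemma rV_neq0P (F : nzRingType) n (v : 'rV[F]_n) : v != 0 -> exists k, v 0 k != 0.
Proof.
move=> v_neq0; apply/existsP; apply: contraR v_neq0 => /existsPn v0.
by apply/eqP/matrixP => i k; rewrite ord1 mxE; apply/eqP; rewrite -[_ == _]negbK v0.
Qed.

Lemma gershgorin_col (F : realFieldType) n (A : 'M[F]_n) l :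
  eigenvalue A l -> exists j, `|l - A j j| <= \sum_(i | i != j) `|A i j|.
Proof.
case/eigenvalueP => v vA /rV_neq0P [k vk_neq0].
have [j _ vj_max] := @arg_maxP _ _ _ k xpredT (fun i => `|v 0 i|) isT.
exists j.
have vj_gt0 : 0 < `|v 0 j| by apply: lt_le_trans (vj_max k isT); rewrite normr_gt0.
rewrite -(ler_pM2r vj_gt0) mulr_suml -normrM.
have -> : (l - A j j) * v 0 j = \sum_(i | i != j) v 0 i * A i j.
  move/matrixP/(_ 0 j): vA; rewrite !mxE (bigD1 j) //= => vAj.
  by apply/eqP; rewrite mulrBl subr_eq -vAj addrC mulrC eqxx.
apply: le_trans (ler_norm_sum _ _ _) _; apply: ler_sum => i _.
by rewrite normrM mulrC ler_wpM2l //; apply: vj_max.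
Qed.

Lemma diag_offdiag_mul (F : comNzRingType) n (a b : F) (v : 'rV[F]_n) j :
  (v *m diag_offdiag_mx n a b) 0 j = (a - b) * v 0 j + b * \sum_i v 0 i.
Proof.
rewrite !mxE (bigD1 j) //= [in RHS](bigD1 j) //= mxE eqxx mulrDr mulr_sumr.
rewrite (eq_bigr (fun i => b * v 0 i)) => [|i /negbTE ij]; last by rewrite mxE ij mulrC.
ring.
Qed.

Lemma eigenvalue_diag_offdiag_mx (F : fieldType) n (a b x : F) : (1 < n)%N ->
  eigenvalue (diag_offdiag_mx n a b) x = (x == a + (n%:R - 1) * b) || (x == a - b).
Proof.
move=> n_gt1; apply/eigenvalueP/orP => [[v vM v_neq0]|].
  pose S := \sum_i v 0 i.
  have vM_coord j : x * v 0 j = (a - b) * v 0 j + b * S.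
    by rewrite -diag_offdiag_mul vM mxE.
  have [S0|S_neq0] := eqVneq S 0.
    have [k vk_neq0] := rV_neq0P v_neq0.
    by right; apply/eqP/(mulIf vk_neq0); rewrite vM_coord S0 mulr0 addr0.
  left; apply/eqP/(mulIf S_neq0).
  rewrite {1}/S mulr_sumr (eq_bigr _ (fun j _ => vM_coord j)) big_split /=.
  by rewrite -mulr_sumr sumr_const card_ord -/S -mulr_natr; ring.
pose i0 : 'I_n := Ordinal (ltnW n_gt1); pose i1 : 'I_n := Ordinal n_gt1.
have v_neq0 (v : 'rV[F]_n) : v 0 i0 != 0 -> v != 0.
  by apply: contraNneq => ->; rewrite mxE.
case=> /eqP ->.
  exists (const_mx 1); last by apply: v_neq0; rewrite mxE oner_neq0.
  apply/matrixP => i j; rewrite ord1 diag_offdiag_mul !mxE.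
  under eq_bigr do rewrite mxE.
  by rewrite sumr_const card_ord -mulr_natr; ring.
exists (delta_mx 0 i0 - delta_mx 0 i1);
  last by apply: v_neq0; rewrite !mxE subr0 oner_neq0.
apply/matrixP => i j; rewrite ord1 diag_offdiag_mul [X in _ = X]mxE.
rewrite (bigD1 i0) // (bigD1 i1) // big1 => [|k /andP [k_i0 k_i1]]; last first.
  by rewrite !mxE (negbTE k_i0) (negbTE k_i1) subr0.
by rewrite !mxE /=; ring.
Qed.

Lemma pair_count_id n (G : {set {set 'I_n}}) i :
  pair_count G i i = #|[set C in G | i \in C]|.
Proof. by apply: eq_card => C; rewrite !inE andbb. Qed.

Lemma pair_count_natE n (G : {set {set 'I_n}}) (i j : 'I_n) :
  pair_count_nat G i j = pair_count G i j.
Proof.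
apply: eq_card => C; rewrite !inE; congr (_ && (_ && _)).
  apply/existsP/idP => [[k /andP [kC /eqP/val_inj <-]] // | iC].
  by exists i; rewrite iC /=.
apply/existsP/idP => [[k /andP [kC /eqP/val_inj <-]] // | jC].
by exists j; rewrite jC /=.
Qed.

Section RealClosed.
Variable R : rcfType.

Lemma mx_pinv_unitmx k (A : 'M[R]_k) : A \in unitmx -> mx_pinv A = invmx A.
Proof.
move=> A_unit; rewrite /mx_pinv; set P := fun B : 'M[R]_k => _.
have [pinvAK _ _ _] : P (epsilon (inhabits 0) P).
  apply: epsilon_spec; exists (invmx A).
  by rewrite /P mulmxV // mulVmx // !mul1mx trmx1.
move/(congr1 (fun X => invmx A *m X *m invmx A)): pinvAK.
by rewrite !mulmxA mulVmx // mul1mx mulmxK // mul1mx.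
Qed.

(* [lambda_max] is an epsilon, so it says nothing unless some eigenvalue exists. *)
Lemma lambda_maxP n (A : 'M[R]_n) a0 : eigenvalue A a0 ->
  eigenvalue A (lambda_max A) /\ forall a, eigenvalue A a -> a <= lambda_max A.
Proof.
move=> Aa0; rewrite /lambda_max.
apply: (epsilon_spec _ (fun l => eigenvalue A l /\ forall a, eigenvalue A a -> a <= l)).
have pA_neq0 : char_poly A != 0 by exact/monic_neq0/char_poly_monic.
have eigenE a : eigenvalue A a = (a \in rootsR (char_poly A)).
  by rewrite eigenvalue_root_char -(roots_on_rootsR pA_neq0).
exists (\big[Num.max/a0]_(x <- rootsR (char_poly A)) x); split.
  rewrite eigenE big_seq; apply: (big_ind (fun y => y \in rootsR _)) => //.
    by rewrite -eigenE.
  by move=> x y xA yA; rewrite maxEle; case: ifP.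
by move=> a; rewrite eigenE => aA; apply: le_bigmax_seq.
Qed.

Lemma lambda_max_eq n (A : 'M[R]_n) l :
  eigenvalue A l -> (forall a, eigenvalue A a -> a <= l) -> lambda_max A = l.
Proof.
move=> Al l_max; have [_ lm_max] := lambda_maxP Al.
by apply/le_anti; rewrite l_max ?lm_max //; exact: (lambda_maxP Al).1.
Qed.

Lemma le_fmax n (f : 'I_n -> R) j : f j <= fmax f.
Proof. by case: n f j => [|m] f j; [case: j | exact: le_bigmax]. Qed.

Lemma sym_mx_eigenvalue n (A : 'M[R]_n) :
  (0 < n)%N -> A^T = A -> exists a, eigenvalue A a.
Proof.
(* Spectral theorem for A seen as a Hermitian matrix over R[i]. *)
case: n A => // n A _ A_sym.
pose Ac : 'M[R[i]]_n.+1 := map_mx (real_complex R) A.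
have Ac_herm : Ac \is hermsymmx.
  apply/is_hermitianmxP; rewrite expr0 scale1r; apply/matrixP => i j.
  by rewrite !mxE conj_Creal ?complex_real // -[in LHS]A_sym mxE.
have /orthomx_spectralP Ac_eq := hermitian_normalmx Ac_herm.
have d_real := hermitian_spectral_diag_real Ac_herm.
set P := spectralmx Ac in Ac_eq; set d := spectral_diag Ac in Ac_eq d_real.
have P_unit : P \in unitmx by exact: spectral_unit.
have Ac_d00 : eigenvalue Ac (d 0 0).
  apply/eigenvalueP; exists (delta_mx 0 0 *m P).
    rewrite Ac_eq !mulmxA mulmxK // scalemxAl; congr (_ *m _).
    apply/matrixP => i j; rewrite mul_mx_diag !mxE ord1 eqxx /=.
    by case: eqP => [->|_]; rewrite ?mul1r ?mulr1 ?mul0r ?mulr0.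
  rewrite mulmx_free_eq0 ?row_free_unit //.
  by apply/eqP => /matrixP/(_ 0 0)/eqP; rewrite !mxE !eqxx oner_eq0.
have /complex_realP [r d00E] : d 0 0 \is Num.real by exact: (mxOverP d_real).
exists r; move: Ac_d00.
by rewrite d00E !eigenvalue_root_char -map_char_poly fmorph_root.
Qed.

Lemma colselT_ones n (C : {set 'I_n}) : (colsel R C)^T *m ones R n = ones R #|C|.
Proof.
apply/matrixP => k l; rewrite !mxE (bigD1 (enum_val k)) //= big1.
  by rewrite !mxE eqxx mulr1 addr0.
by move=> j /negbTE kj; rewrite !mxE kj mul0r.
Qed.

Lemma colsel_ones n (C : {set 'I_n}) :
  colsel R C *m ones R #|C| = \col_i (i \in C)%:R.
Proof.
apply/matrixP => i l; rewrite !mxE.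
under eq_bigr do rewrite !mxE mulr1.
rewrite -(big_enum_val (fun x => (i == x)%:R) : _ = \sum_(k < #|C|) _).
have [iC|iNC] := boolP (i \in C).
  rewrite (bigD1 i) //= big1 ?eqxx ?addr0 //.
  by move=> j /andP [_ ji]; rewrite eq_sym (negbTE ji).
by rewrite big1 // => j jC; case: eqP jC => // <-; rewrite (negbTE iNC).
Qed.

Lemma colselT_colsel n (C : {set 'I_n}) : (colsel R C)^T *m colsel R C = 1%:M.
Proof.
apply/matrixP => k l; rewrite !mxE (bigD1 (enum_val k)) //= big1.
  by rewrite !mxE eqxx mul1r addr0 (inj_eq enum_val_inj).
by move=> j /negbTE kj; rewrite !mxE kj mul0r.
Qed.

Lemma colselT_diag n (C : {set 'I_n}) (w : 'rV[R]_n) :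
  (colsel R C)^T *m diag_mx w = diag_mx (\row_k w 0 (enum_val k)) *m (colsel R C)^T.
Proof.
rewrite mul_mx_diag mul_diag_mx; apply/matrixP => k j; rewrite !mxE.
by case: eqP => [->|]; rewrite ?mul1r ?mulr1 ?mul0r ?mulr0.
Qed.

Lemma proj_S_diag n (w : 'rV[R]_n) (C : {set 'I_n}) : (forall i, 0 < w 0 i) ->
  proj_S (diag_mx w) C = colsel R C *m (colsel R C)^T.
Proof.
move=> w_gt0; rewrite /proj_S colselT_diag.
rewrite -[diag_mx _ *m _ *m _]mulmxA colselT_colsel mulmx1.
set D := diag_mx _.
have D_unit : D \in unitmx.
  by rewrite unitmxE det_diag unitfE; apply/prodf_neq0 => k _; rewrite mxE gt_eqF.
by rewrite mx_pinv_unitmx // -mulmxA colselT_diag -/D -[LHS]mulmxA mulKmx.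
Qed.

Lemma proj_S_diag_ones n (w : 'rV[R]_n) (C : {set 'I_n}) : (forall i, 0 < w 0 i) ->
  proj_S (diag_mx w) C *m ones R n = \col_i (i \in C)%:R.
Proof. by move=> w_gt0; rewrite proj_S_diag // -mulmxA colselT_ones colsel_ones. Qed.

Lemma proj_S_diag_outer n (w : 'rV[R]_n) (C : {set 'I_n}) : (forall i, 0 < w 0 i) ->
  proj_S (diag_mx w) C *m ones R n *m (ones R n)^T *m (proj_S (diag_mx w) C)^T
  = \matrix_(i, j) ((i \in C) && (j \in C))%:R.
Proof.
move=> w_gt0; rewrite proj_S_diag_ones // -mulmxA -trmx_mul proj_S_diag_ones //.
apply/matrixP => i j; rewrite !mxE big_ord1 !mxE.
by case: (i \in C); case: (j \in C); rewrite ?mulr1 ?mulr0.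
Qed.

Lemma expect_term_diag n (w : 'rV[R]_n) G c1 : (forall i, 0 < w 0 i) ->
  expect_term (diag_mx w) G c1
  = \matrix_(i, j) (#|G|%:R^-1 * (theta R G c1 ^+ 2 * (pair_count G i j)%:R)).
Proof.
move=> w_gt0; apply/matrixP => i j; rewrite !mxE summxE; congr (_ * _).
under eq_bigr do rewrite mxE proj_S_diag_outer // mxE.
rewrite -mulr_sumr /pair_count -sum1_card natr_sum; congr (_ * _).
rewrite big_mkcond [RHS]big_mkcond; apply: eq_bigr => C _; rewrite !inE.
by case: (C \in G) => //; case: (_ && _).
Qed.

Section UniformSampling.
Variables (n : nat) (G : {set {set 'I_n}}) (c1 c2 : nat).
Hypotheses (c1_gt0 : (0 < c1)%N) (G_gt0 : (0 < #|G|)%N).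
Hypothesis c1_uniform : forall i, #|[set C in G | i \in C]| = c1.
Hypothesis c2_uniform : forall i j, i != j -> pair_count G i j = c2.

Lemma expect_term_sub_ones (w : 'rV[R]_n) : (forall i, 0 < w 0 i) ->
  expect_term (diag_mx w) G c1 - ones R n *m (ones R n)^T
  = diag_offdiag_mx n (#|G|%:R / c1%:R - 1) (#|G|%:R * c2%:R / (c1%:R ^+ 2) - 1).
Proof.
move=> w_gt0; rewrite expect_term_diag //; apply/matrixP => i j.
have c1_neq0 : c1%:R != 0 :> R by rewrite pnatr_eq0 -lt0n.
have G_neq0 : #|G|%:R != 0 :> R by rewrite pnatr_eq0 -lt0n.
rewrite !mxE big_ord1 !mxE mulr1 /theta.
have [<-|ij] := eqVneq i j; first by rewrite pair_count_id c1_uniform; field; exact/andP.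
by rewrite c2_uniform //; field; exact/andP.
Qed.

Lemma rho_diag_le (w : 'rV[R]_n) : (0 < n)%N -> (forall i, 0 < w 0 i) ->
  rho (diag_mx w) (diag_mx (map_mx Num.sqrt w)) G c1 <=
  fmax (fun i : 'I_n => (#|G|%:R / c1%:R - 1) * w 0 i
    + \sum_(j < n | j != i) w 0 j * `|#|G|%:R * c2%:R / (c1%:R ^+ 2) - 1|).
Proof.
move=> n_gt0 w_gt0; rewrite /rho expect_term_sub_ones //.
set a := (_ / _ - 1); set b := (_ * _ / _ - 1); set M := diag_offdiag_mx n a b.
set S := diag_mx (map_mx Num.sqrt w).
have S_unit : S \in unitmx.
  rewrite unitmxE det_diag unitfE; apply/prodf_neq0 => i _.
  by rewrite mxE sqrtr_eq0 -ltNge.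
have SS : S *m S = diag_mx w.
  rewrite mul_diag_mx; apply/matrixP => i j; rewrite !mxE.
  by case: eqP => [->|]; rewrite ?mulr1n ?mulr0n ?mulr0 // -expr2 sqr_sqrtr // ltW.
have N_sym : (S *m M *m S)^T = S *m M *m S.
  rewrite !trmx_mul tr_diag_mx mulmxA; congr (_ *m _ *m _).
  by apply/matrixP => i j; rewrite !mxE eq_sym.
have [l0 Nl0] := sym_mx_eigenvalue n_gt0 N_sym.
have Sinv_unit : invmx S \in unitmx by rewrite unitmx_inv.
have WMl := eigenvalue_similar Sinv_unit (lambda_maxP Nl0).1.
(* S (S M S) S^-1 = W M *)
rewrite invmxK !mulmxA SS mulmxK // in WMl.
have [j lj] := gershgorin_col WMl.
apply: le_trans (le_fmax _ j).
have col_sum :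
    \sum_(i | i != j) `|(diag_mx w *m M) i j| = \sum_(i | i != j) w 0 i * `|b|.
  by apply: eq_bigr => i /negbTE ij; rewrite mul_diag_mx !mxE ij normrM ger0_norm // ltW.
have WM_jj : (diag_mx w *m M) j j = w 0 j * a by rewrite mul_diag_mx !mxE eqxx.
rewrite col_sum WM_jj in lj.
have := ler_norm (lambda_max (S *m M *m S) - w 0 j * a); nra.
Qed.

Lemma rho_id : (1 < n)%N ->
  rho (1%:M : 'M[R]_n) 1%:M G c1 =
  Num.max (#|G|%:R / c1%:R * (1 + (n%:R - 1) * (c2%:R / c1%:R)) - n%:R)
          (#|G|%:R / c1%:R * (1 - c2%:R / c1%:R)).
Proof.
move=> n_gt1; have one_gt0 i : 0 < (const_mx 1 : 'rV[R]_n) 0 i by rewrite mxE.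
rewrite /rho -diag_const_mx expect_term_sub_ones // diag_const_mx mul1mx mulmx1.
have c1_neq0 : c1%:R != 0 :> R by rewrite pnatr_eq0 -lt0n.
set a := (_ / _ - 1); set b := (_ * _ / _ - 1).
have -> : #|G|%:R / c1%:R * (1 + (n%:R - 1) * (c2%:R / c1%:R)) - n%:R
          = a + (n%:R - 1) * b by rewrite /a /b; field.
have -> : #|G|%:R / c1%:R * (1 - c2%:R / c1%:R) = a - b by rewrite /a /b; field.
apply: lambda_max_eq => [|x]; rewrite eigenvalue_diag_offdiag_mx //.
  by rewrite maxEle; case: ifP; rewrite eqxx ?orbT.
by case/orP => /eqP ->; rewrite le_max lexx ?orbT.
Qed.

End UniformSampling.

End RealClosed.

Theorem theorem4p19 (R : rcfType) (n : nat) (hn : (2 <= n)%N)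
  (G : {set {set 'I_n}}) (c1 c2 : nat)
  (hpair : exists c : nat, forall i j : 'I_n, i != j -> pair_count G i j = c)
  (hc2 : c2 = pair_count_nat G 0 1)
  (hc1 : (1 <= c1)%N)
  (hunif : forall i : 'I_n, #|[set C in G | i \in C]| = c1) :
  (forall w : 'rV[R]_n, (forall i, 0 < w 0 i) ->
     rho (diag_mx w) (diag_mx (map_mx Num.sqrt w)) G c1 <=
     fmax (fun i : 'I_n =>
       (#|G|%:R / c1%:R - 1) * w 0 i
       + \sum_(j < n | j != i) w 0 j
           * `|#|G|%:R * c2%:R / (c1%:R ^+ 2) - 1|))
  /\
  rho (1%:M : 'M[R]_n) (1%:M) G c1 =
    Num.max (#|G|%:R / c1%:R * (1 + (n%:R - 1) * (c2%:R / c1%:R)) - n%:R)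
            (#|G|%:R / c1%:R * (1 - c2%:R / c1%:R)).
Proof.
have [c c_uniform] := hpair.
have n_gt0 : (0 < n)%N := ltnW hn.
pose i0 : 'I_n := Ordinal n_gt0; pose i1 : 'I_n := Ordinal hn.
have c2_uniform i j : i != j -> pair_count G i j = c2.
  by move=> ij; rewrite hc2 -[0%N]/(val i0) -[1%N]/(val i1) pair_count_natE !c_uniform.
have G_gt0 : (0 < #|G|)%N.
  by apply: leq_trans hc1 _; rewrite -(hunif i0) subset_leq_card // setIdE subsetIl.
split => [w w_gt0|]; first exact: rho_diag_le.
exact: rho_id.
Qed.
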